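(* In Model B$_K$ below, assume $l\to\infty$ and $lp\to0$ as $d\to\infty$. Then for the $c$-segmentation rule with $c=d/l$, $$\mathbb{P}(w\text{ is misclassified})\to0\quad\text{as }d\to\infty.$$
   Context: Segmentation rule. Let $d,c$ be positive integers with $c\mid d$. For $x\in\mathbb{R}^d$ and $1\le j\le c$ let $x_j\in\mathbb{R}^{d/c}$ denote its $j$-th block $(x_{(j-1)d/c+1},\dots,x_{jd/c})$, so that $x=x_1\circ\cdots\circ x_c$ (concatenation). Given dictionary words $w^1,\dots,w^K\in\mathbb{R}^d$ ($w^k$ representing class $k$) and a test word $w\in\mathbb{R}^d$, for each $j$ let $U_j\in\{1,\dots,K\}$ be an index $k$ minimizing the Euclidean distance $\|w_j-w^k_j\|$ in $\mathbb{R}^{d/c}$, chosen uniformly at random among all minimizers (independently of everything else). The $c$-segmentation rule assigns to $w$ the class $\chi(w)\in\operatorname{argmax}_k\#\{j:U_j=k\}$, chosen uniformly at random among all maximizers. The case $c=1$ is the Euclidean (nearest-neighbour) rule and $c=d$ is coordinate-by-coordinate comparison. $w$ is classified correctly if $\chi(w)$ equals its true class, misclassified otherwise. Probabilities are over all random objects including tie-breaks. Model B$_K$. Let $d\ge1$, an integer $l\ge1$ with $l\mid d$, $N>0$, $p\in(0,1)$ (possibly depending on $d$) and a fixed integer $2\le K\le l+1$ be given. Split $\{1,\dots,d\}$ into the $d/l$ consecutive blocks $B_t=\{(t-1)l+1,\dots,tl\}$. Let $m_1=0\in\mathbb{R}^d$ and, for $k=2,\dots,K$, let $m_k\in\{0,1\}^d$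 be such that in every block $B_t$ exactly one coordinate of $m_k$ equals $1$ and all others equal $0$, the position of this $1$ inside $B_t$ being different for different $k$. Let $Y^{(0)},Y^{(1)},\dots,Y^{(K)}$ be independent random vectors in $\mathbb{R}^d$, each with i.i.d. coordinates satisfying $\mathbb{P}(Y_i=N)=p$, $\mathbb{P}(Y_i=0)=1-p$. The dictionary words are $w^k=m_k+Y^{(k)}$ (class $k$), $k=1,\dots,K$, and the test word is $w=m_1+Y^{(0)}$ (true class 1). *)

From HB Require Import structures.
From mathcomp Require Import all_boot all_order all_algebra.
Unset Strict Implicit. Unset Printing Implicit Defensive.
Import Order.TTheory GRing.Theory Num.Theory.
Local Open Scope ring_scope.

(* Coordinates and blocks are 0-based: coordinate i : 'I_d lies in segment
   j = i %/ (d %/ c) (segments of length d/c). Classes are indexed by 'I_K,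
   class "1" of the paper being the index with value 0. *)

Definition block_of (d c : nat) (i : nat) : nat := (i %/ (d %/ c))%N.

Definition seg_dist (R : rcfType) (d c : nat) (j : nat) (x y : 'I_d -> R) : R :=
  Num.sqrt (\sum_(i : 'I_d | block_of d c i == j) (x i - y i) ^+ 2).

Definition nearest_set (R : rcfType) (d c K : nat) (ws : 'I_K -> 'I_d -> R)
    (w : 'I_d -> R) (j : 'I_c) : {set 'I_K} :=
  [set k | [forall k', seg_dist R d c j w (ws k) <= seg_dist R d c j w (ws k')]].

Definition vote_count (c K : nat) (u : {ffun 'I_c -> 'I_K}) (k : 'I_K) : nat :=
  #|[set j | u j == k]|.

Definition winners (c K : nat) (u : {ffun 'I_c -> 'I_K}) : {set 'I_K} :=
  [set k | [forall k', (vote_count c K u k' <= vote_count c K u k)%N]].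

(* Probability of the vote vector u = (U_1,...,U_c) under independent uniform
   tie-breaking among the minimizers on each segment. *)
Definition tiebreak_weight (R : rcfType) (d c K : nat) (ws : 'I_K -> 'I_d -> R)
    (w : 'I_d -> R) (u : {ffun 'I_c -> 'I_K}) : R :=
  \prod_(j : 'I_c)
     (if u j \in nearest_set R d c K ws w j then (#|nearest_set R d c K ws w j|%:R)^-1 else 0).

(* Conditional probability (given u) that the uniformly chosen maximizer is
   the true class (the class with index value 0). *)
Definition correct_given (R : rcfType) (c K : nat) (u : {ffun 'I_c -> 'I_K}) : R :=
  if [exists k in winners c K u, val k == 0%N] then (#|winners c K u|%:R)^-1 else 0.

Definition seg_misclass_prob (R : rcfType) (d c K : nat)
    (ws : 'I_K -> 'I_d -> R) (w : 'I_d -> R) : R :=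
  \sum_(u : {ffun 'I_c -> 'I_K})
     tiebreak_weight R d c K ws w u * (1 - correct_given R c K u).

Definition modelB_means (R : rcfType) (d l K : nat) (m : 'I_K -> 'I_d -> R) : Prop :=
  [/\ (forall k i, val k = 0%N -> m k i = 0),
      (forall k i, (0 < val k)%N -> m k i = 0 \/ m k i = 1),
      (forall k t, (0 < val k)%N -> (t < d %/ l)%N ->
          #|[set i : 'I_d | (i %/ l == t)%N && (m k i == 1)]| = 1%N)
    & (forall k k' i, (0 < val k)%N -> (0 < val k')%N -> k != k' ->
          m k i = 1 -> m k' i = 0)].

(* Noise configuration: Y (a, i) = true iff Y^(a)_i = N, for a = 0..K
   (a = 0: test word; a = k+1: dictionary word of class index k). *)
Definition noise_weight (R : rcfType) (K d : nat) (p : R)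
    (Y : {ffun 'I_K.+1 * 'I_d -> bool}) : R :=
  \prod_(x : 'I_K.+1 * 'I_d) (if Y x then p else 1 - p).

Definition dict_word (R : rcfType) (K d : nat) (N : R) (m : 'I_K -> 'I_d -> R)
    (Y : {ffun 'I_K.+1 * 'I_d -> bool}) (k : 'I_K) : 'I_d -> R :=
  fun i => m k i + (if Y (lift ord0 k, i) then N else 0).

(* test word w = m_1 + Y^(0) with m_1 = 0 *)
Definition test_word (R : rcfType) (K d : nat) (N : R)
    (Y : {ffun 'I_K.+1 * 'I_d -> bool}) : 'I_d -> R :=
  fun i => if Y (ord0, i) then N else 0.

Definition modelB_misclass_prob (R : rcfType) (d l K : nat) (N p : R)
    (m : 'I_K -> 'I_d -> R) : R :=
  \sum_(Y : {ffun 'I_K.+1 * 'I_d -> bool})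
     noise_weight R K d p Y * seg_misclass_prob R d (d %/ l) K (dict_word R K d N m Y) (test_word R K d N Y).

From HB Require Import structures.
From mathcomp Require Import all_boot all_order all_algebra.
From mathcomp Require Import zify ring.
Set Implicit Arguments.
Unset Strict Implicit.
Import Order.TTheory GRing.Theory Num.Theory.
Local Open Scope ring_scope.

(* On a block where no noise variable equals N, the test word coincides with
   the class-1 word and is at distance >= 1 from every other dictionary word
   (which has a 1 in that block), so the block votes for class 1 without a tie.
   A noisy coordinate spoils at most one block, so when fewer than c/2 of the
   (K+1)d noise variables equal N, class 1 wins an absolute majority of the
   c = d/l votes.  Markov's inequality then bounds the misclassification
   probability by 2(K+1)dp/c = 2(K+1)lp, which tends to 0. *)

Lemma invr_nat_ge0_le1 (R : numFieldType) (n : nat) : 0 <= (n%:R : R)^-1 <= 1.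
Proof.
rewrite invr_ge0 ler0n /=; case: n => [|n]; first by rewrite invr0 ler01.
by rewrite invf_le1 ?ltr0Sn // ler1n.
Qed.

Section NoiseWeight.

Variables (R : rcfType) (K d : nat) (p : R).

Lemma noise_weight_ge0 Y : 0 <= p <= 1 -> 0 <= noise_weight R K d p Y.
Proof.
by case/andP=> p0 p1; apply: prodr_ge0 => x _; case: (Y x); rewrite ?subr_ge0.
Qed.

Lemma sum_noise_weight_indicator x0 :
  \sum_Y noise_weight R K d p Y * (Y x0)%:R = p.
Proof.
pose g x (b : bool) := if b then p else if x == x0 then 0 else 1 - p.
transitivity (\sum_(Y : {ffun 'I_K.+1 * 'I_d -> bool}) \prod_x g x (Y x)).
  apply: eq_bigr => Y _; rewrite /noise_weight (bigD1 x0) //= [RHS](bigD1 x0) //=.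
  rewrite mulrAC /g eqxx; congr (_ * _).
    by case: (Y x0); rewrite ?mulr1 ?mulr0.
  by apply: eq_bigr => x /negbTE ->.
rewrite -bigA_distr_bigA (bigD1 x0) //= [X in _ * X]big1 ?mulr1.
  by rewrite big_bool /g eqxx /= addr0.
by move=> x /negbTE xn; rewrite big_bool /g xn /= addrC subrK.
Qed.

Lemma sum_noise_weight_card :
  \sum_Y noise_weight R K d p Y * #|[set x | Y x]|%:R = (K.+1 * d)%:R * p.
Proof.
transitivity (\sum_x \sum_Y noise_weight R K d p Y * (Y x)%:R).
  rewrite exchange_big; apply: eq_bigr => Y _.
  rewrite -mulr_sumr -sum1_card natr_sum big_mkcond /=; congr (_ * _).
  by apply: eq_bigr => x _; rewrite inE; case: (Y x).
under eq_bigr do rewrite sum_noise_weight_indicator.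
by rewrite sumr_const card_prod !card_ord mulr_natl.
Qed.

End NoiseWeight.

Section SegmentationRule.

Variables (R : rcfType) (d c K : nat) (ws : 'I_K -> 'I_d -> R) (w : 'I_d -> R).

Lemma tiebreak_weight_ge0 u : 0 <= tiebreak_weight R d c K ws w u.
Proof.
apply: prodr_ge0 => j _; case: ifP => // _.
by case/andP: (invr_nat_ge0_le1 R #|nearest_set R d c K ws w j|).
Qed.

Lemma sum_tiebreak_weight_le1 : \sum_u tiebreak_weight R d c K ws w u <= 1.
Proof.
pose F j k : R := let S := nearest_set R d c K ws w j in
  if k \in S then (#|S|%:R)^-1 else 0.
rewrite (eq_bigr (fun u : {ffun 'I_c -> 'I_K} => \prod_j F j (u j))) //.
rewrite -bigA_distr_bigA.
apply: prodr_ile1 => j _; rewrite /F; set S := nearest_set _ _ _ _ _ _ j.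
rewrite -big_mkcond /= sumr_const mulrn_wge0 ?invr_ge0 ?ler0n //=.
case: #|S| => [|n]; first by rewrite mulr0n.
by rewrite -[_ *+ _]mulr_natr mulVf ?pnatr_eq0.
Qed.

Lemma tiebreak_weight_support u j :
  tiebreak_weight R d c K ws w u != 0 -> u j \in nearest_set R d c K ws w j.
Proof.
apply: contraNT => uj; apply/eqP.
by rewrite /tiebreak_weight (bigD1 j) //= (negbTE uj) mul0r.
Qed.

Lemma correct_given_ge0_le1 u : 0 <= correct_given R c K u <= 1.
Proof.
by rewrite /correct_given; case: ifP => _; rewrite ?invr_nat_ge0_le1 ?lexx ?ler01.
Qed.

Lemma seg_misclass_prob_ge0_le1 : 0 <= seg_misclass_prob R d c K ws w <= 1.
Proof.
apply/andP; split.
  apply: sumr_ge0 => u _; rewrite mulr_ge0 ?tiebreak_weight_ge0 // subr_ge0.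
  by case/andP: (correct_given_ge0_le1 u).
apply: le_trans sum_tiebreak_weight_le1; apply: ler_sum => u _.
rewrite ler_piMr ?tiebreak_weight_ge0 // lerBlDr lerDl.
by case/andP: (correct_given_ge0_le1 u).
Qed.

End SegmentationRule.

Lemma winners_majority c K (u : {ffun 'I_c -> 'I_K}) k0 (S : {set 'I_c}) :
  (forall j, j \notin S -> u j = k0) -> (2 * #|S| < c)%N ->
  winners c K u = [set k0].
Proof.
move=> uS small.
have votes_k0 : (#|~: S| <= vote_count c K u k0)%N.
  by apply: subset_leq_card; apply/subsetP => j; rewrite !inE => /uS ->.
have := cardsC S; rewrite card_ord => cardS.
have votes_other k : k != k0 -> (vote_count c K u k <= #|S|)%N.
  move=> kk0; apply: subset_leq_card; apply/subsetP => j; rewrite inE.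
  by apply: contraTT => /uS ->; rewrite eq_sym.
apply/setP => k; rewrite inE in_set1.
have [->|kk0] := eqVneq k k0.
  apply/forallP => k'; have [->//|k'k0] := eqVneq k' k0.
  have := votes_other _ k'k0; lia.
apply/negbTE/forallP => /(_ k0); have := votes_other _ kk0; lia.
Qed.

Lemma correct_given_unique_winner (R : rcfType) c K u (k0 : 'I_K) :
  val k0 = 0%N -> winners c K u = [set k0] -> correct_given R c K u = 1.
Proof.
move=> k00 win; rewrite /correct_given win cards1 invr1.
by case: existsP => // -[]; exists k0; rewrite in_set1 eqxx k00.
Qed.

Lemma divn_divn_dvd (d l : nat) :
  (0 < d)%N -> (l %| d)%N -> (d %/ (d %/ l))%N = l.
Proof. by move=> d0 ld; rewrite divnA // mulKn. Qed.

Definition noise_free_block K d l c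
    (Y : {ffun 'I_K.+1 * 'I_d -> bool}) (j : 'I_c) :=
  [forall x : 'I_K.+1 * 'I_d, (x.2 %/ l == j)%N ==> ~~ Y x].

Lemma card_noisy_blocks_le K d l c (Y : {ffun 'I_K.+1 * 'I_d -> bool}) :
  (#|[set j : 'I_c | ~~ noise_free_block l Y j]| <= #|[set x | Y x]|)%N.
Proof.
case: d Y => [|d] Y.
  rewrite (_ : [set j : 'I_c | _] = set0) ?cards0 //; apply/setP => j.
  by rewrite !inE; apply/negbTE; rewrite negbK; apply/forallP => -[a []].
pose x0 : 'I_K.+1 * 'I_d.+1 := (ord0, ord0).
pose witness (j : 'I_c) := odflt x0 [pick x | Y x && (x.2 %/ l == j)%N].
have witnessP j : ~~ noise_free_block l Y j ->
    Y (witness j) && ((witness j).2 %/ l == j)%N.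
  rewrite negb_forall => /existsP[x]; rewrite negb_imply negbK andbC => Yx.
  by rewrite /witness; case: pickP => [//|/(_ x)]; rewrite Yx.
rewrite -(card_in_imset (f := witness)).
  apply: subset_leq_card; apply/subsetP => x /imsetP[j].
  by rewrite !inE => /witnessP/andP[Yx _] ->.
move=> j1 j2; rewrite !inE.
move=> /witnessP/andP[_ /eqP e1] /witnessP/andP[_ /eqP e2] e.
by apply: val_inj; rewrite /= -e1 -e2 e.
Qed.

Section ModelB.

Variables (R : rcfType) (K d l : nat) (N : R) (m : 'I_K -> 'I_d -> R).
Hypotheses (d0 : (0 < d)%N) (ld : (l %| d)%N) (mB : modelB_means R d l K m).
Hypothesis K_gt0 : (0 < K)%N.

Let k0 : 'I_K := Ordinal K_gt0.

Let c := (d %/ l)%N.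

Let c_gt0 : (0 < c)%N.
Proof.
have l0 : (0 < l)%N.
  by rewrite lt0n; apply: contraTneq ld => ->; rewrite dvd0n -lt0n d0.
by rewrite divn_gt0 // dvdn_leq.
Qed.

Implicit Types (Y : {ffun 'I_K.+1 * 'I_d -> bool}).

Lemma nearest_set_noise_free Y (j : 'I_c) :
  noise_free_block l Y j ->
  nearest_set R d c K (dict_word R K d N m Y) (test_word R K d N Y) j = [set k0].
Proof.
case: mB => [m0 _ m1 _] /forallP noise_free.
have blk i : block_of d c i = (i %/ l)%N by rewrite /block_of divn_divn_dvd.
have Y0 a (i : 'I_d) : (i %/ l == j)%N -> Y (a, i) = false.
  by move=> ij; apply/negbTE; move: (noise_free (a, i)); rewrite /= ij.
set dist := fun k =>
  seg_dist R d c j (test_word R K d N Y) (dict_word R K d N m Y k).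
have dist_k0 : dist k0 = 0.
  rewrite /dist /seg_dist big1 ?sqrtr0 // => i; rewrite blk => ij.
  by rewrite /test_word /dict_word !Y0 // m0 // addr0 subr0 expr0n.
have dist_other k : (0 < val k)%N -> 0 < dist k.
  move=> kp; have : (0 < #|[set i : 'I_d | (i %/ l == j)%N && (m k i == 1%R)]|)%N.
    by rewrite m1.
  case/card_gt0P => i; rewrite inE => /andP[ij /eqP mki].
  rewrite /dist /seg_dist sqrtr_gt0 (bigD1 i) /=; last by rewrite blk.
  rewrite /test_word /dict_word !Y0 // mki addr0 sub0r sqrrN expr1n.
  by rewrite ltr_pwDl ?ltr01 // sumr_ge0 // => i' _; apply: sqr_ge0.
apply/setP => k; rewrite in_set1 inE.
have [->|kk0] := eqVneq k k0.
  by apply/forallP => k'; rewrite -/(dist _) dist_k0 sqrtr_ge0.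
have kp : (0 < val k)%N.
  by rewrite lt0n; apply: contra kk0 => /eqP kv; apply/eqP/val_inj; rewrite /= kv.
by apply/negbTE/forallP => /(_ k0); rewrite -!/(dist _) dist_k0 leNgt dist_other.
Qed.

Lemma seg_misclass_prob_few_noise Y :
  (2 * #|[set x | Y x]| < c)%N ->
  seg_misclass_prob R d c K (dict_word R K d N m Y) (test_word R K d N Y) = 0.
Proof.
move=> few; rewrite /seg_misclass_prob big1 // => u _.
have [->|tw0] := eqVneq (tiebreak_weight R d c K (dict_word R K d N m Y)
                                          (test_word R K d N Y) u) 0.
  by rewrite mul0r.
set S := [set j : 'I_c | ~~ noise_free_block l Y j].
have uS j : j \notin S -> u j = k0.
  rewrite inE negbK => /nearest_set_noise_free nj.
  by apply/set1P; rewrite -nj tiebreak_weight_support.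
have winS : (2 * #|S| < c)%N.
  by apply: leq_ltn_trans few; rewrite leq_mul2l card_noisy_blocks_le orbT.
have win := winners_majority uS winS.
by rewrite (correct_given_unique_winner R (k0 := k0) erefl win) subrr mulr0.
Qed.

Lemma seg_misclass_prob_le_noise Y :
  seg_misclass_prob R d c K (dict_word R K d N m Y) (test_word R K d N Y)
    <= 2 * #|[set x | Y x]|%:R / c%:R.
Proof.
have [few|many] := ltnP (2 * #|[set x | Y x]|) c.
  by rewrite seg_misclass_prob_few_noise // divr_ge0 ?mulr_ge0 ?ler0n.
case/andP: (@seg_misclass_prob_ge0_le1 R d c K (dict_word R K d N m Y)
                                      (test_word R K d N Y)) => _ le1.
apply: le_trans le1 _.
by rewrite ler_pdivlMr ?ltr0n // mul1r -natrM ler_nat.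
Qed.

Lemma modelB_misclass_prob_le (p : R) : 0 <= p <= 1 ->
  0 <= modelB_misclass_prob R d l K N p m <= 2 * K.+1%:R * (l%:R * p).
Proof.
move=> p01; apply/andP; split.
  apply: sumr_ge0 => Y _; rewrite mulr_ge0 ?noise_weight_ge0 //.
  by case/andP: (@seg_misclass_prob_ge0_le1 R d c K (dict_word R K d N m Y)
                                            (test_word R K d N Y)).
apply: le_trans (ler_sum _ (fun Y _ => ler_wpM2l (noise_weight_ge0 Y p01)
                                      (seg_misclass_prob_le_noise Y))) _.
under eq_bigr do rewrite mulrA mulrCA -mulrA.
rewrite -mulr_sumr -mulr_suml sum_noise_weight_card.
have c0 : (c%:R : R) != 0 by rewrite pnatr_eq0 -lt0n.
have dE : (d%:R : R) = c%:R * l%:R by rewrite -natrM divnK.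
by rewrite natrM dE le_eqVlt; apply/orP; left; apply/eqP; field.
Qed.

End ModelB.

Theorem proposition7 (R : rcfType) (K : nat) (d l : nat -> nat) (N p : nat -> R)
    (m : forall n : nat, 'I_K -> 'I_(d n) -> R) :
  (2 <= K)%N ->
  (forall n, (0 < d n)%N /\ (0 < l n)%N /\ (l n %| d n)%N) ->
  (forall n, (K <= l n + 1)%N) ->
  (forall n, 0 < N n) ->
  (forall n, 0 < p n < 1) ->
  (forall n, modelB_means R (d n) (l n) K (m n)) ->
  (forall M : nat, exists n0, forall n, (n0 <= n)%N -> (M <= d n)%N) ->
  (forall M : nat, exists n0, forall n, (n0 <= n)%N -> (M <= l n)%N) ->
  (forall eps : R, 0 < eps ->
     exists n0, forall n, (n0 <= n)%N -> `|(l n)%:R * p n| < eps) ->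
  forall eps : R, 0 < eps ->
    exists n0, forall n, (n0 <= n)%N ->
      `|modelB_misclass_prob R (d n) (l n) K (N n) (p n) (m n)| < eps.
Proof.
move=> K2 hdl _ _ hp hm _ _ hlp eps eps0.
have C0 : 0 < 2 * K.+1%:R :> R by rewrite mulr_gt0 ?ltr0n.
have [n0 lp_small] := hlp (eps / (2 * K.+1%:R)) (divr_gt0 eps0 C0).
exists n0 => n /lp_small /(le_lt_trans (ler_norm _)) lp_lt.
have [d0 [_ ld]] := hdl n.
have p01 : 0 <= p n <= 1 by case/andP: (hp n) => /ltW -> /ltW ->.
have /andP[P0 P1] := modelB_misclass_prob_le (N n) d0 ld (hm n) (ltnW K2) p01.
by rewrite ger0_norm //; apply: le_lt_trans P1 _; rewrite mulrC -ltr_pdivlMr.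
Qed.
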